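(* Let $H$ be a weak Hopf algebra. The category ${}_H\mathbf{parMod}$ of partial $H$-modules is isomorphic to the category ${}_{{H_{par}^w}}\mathbf{Mod}$ of left modules over ${H_{par}^w}$.
   Context: All algebras are associative and unital over a field $\Bbbk$; Sweedler notation $\Delta(h)=h_1\otimes h_2$. A weak Hopf algebra is $(H,m,u,\Delta,\varepsilon,S)$ with $H$ an algebra, $(H,\Delta,\varepsilon)$ a coalgebra, and for all $g,h,k$: $\Delta(kh)=\Delta(k)\Delta(h)$; $\varepsilon(kh_1)\varepsilon(h_2g)=\varepsilon(khg)=\varepsilon(kh_2)\varepsilon(h_1g)$; $(1\otimes\Delta(1))(\Delta(1)\otimes1)=\Delta^2(1)=(\Delta(1)\otimes1)(1\otimes\Delta(1))$; $h_1S(h_2)=\varepsilon(1_1h)1_2$; $S(h_1)h_2=1_1\varepsilon(h1_2)$; $S(h)=S(h_1)h_2S(h_3)$, where $\Delta(1)=1_1\otimes1_2$. ${H_{par}^w}=T(H)/I$, where $T(H)$ is the tensor algebra of the vector space $H$ and $I$ is the ideal generated by, for all $h,k\in H$: $1_H-1_{T(H)}$; $h\otimes k_1\otimes S(k_2)-hk_1\otimes S(k_2)$; $h\otimes S(k_1)\otimes k_2-hS(k_1)\otimes k_2$; $h_1\otimes S(h_2)\otimes k-h_1\otimes S(h_2)k$; $S(h_1)\otimes h_2\otimes k-S(h_1)\otimes h_2k$; $h-h_1\otimes S(h_2)\otimes h_3$. A partial $H$-module is a vector space $M$ with a linear map $\bullet\colon H\otimes M\to M$ such that for all $m\in M$,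 $h,k\in H$: $1_H\bullet m=m$; $h\bullet(k_1\bullet(S(k_2)\bullet m))=hk_1\bullet(S(k_2)\bullet m)$; $h\bullet(S(k_1)\bullet(k_2\bullet m))=hS(k_1)\bullet(k_2\bullet m)$; $h_1\bullet(S(h_2)\bullet(k\bullet m))=h_1\bullet(S(h_2)k\bullet m)$; $S(h_1)\bullet(h_2\bullet(k\bullet m))=S(h_1)\bullet(h_2k\bullet m)$; $h_1\bullet(S(h_2)\bullet(h_3\bullet m))=h\bullet m$. Morphisms of partial $H$-modules are linear maps $f$ with $f(h\bullet m)=h\bullet f(m)$. *)

From HB Require Import structures.
From mathcomp Require Import all_boot all_algebra.
From mathcomp.multinomials Require Import monalg.
From Stdlib Require Import ClassicalEpsilon JMeq.
Set Implicit Arguments. Unset Strict Implicit. Unset Printing Implicit Defensive.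
Import GRing.Theory.
Local Open Scope ring_scope.
Local Open Scope quotient_scope.

Definition pbool (P : Prop) : bool :=
  if excluded_middle_informative P then true else false.
Lemma pboolE (P : Prop) : pbool P <-> P.
Proof. by rewrite /pbool; case: excluded_middle_informative. Qed.

Section RingQuot.
Variables (A : pzRingType) (G : A -> Prop).

Definition in_ideal_gen (a : A) : Prop :=
  exists s : seq (A * A * A), (forall t, List.In t s -> G t.1.2) /\
    a = \sum_(t <- s) t.1.1 * t.1.2 * t.2.

Lemma ideal0 : in_ideal_gen 0.
Proof. by exists [::]; split=> //; rewrite big_nil. Qed.
Lemma idealD a b : in_ideal_gen a -> in_ideal_gen b -> in_ideal_gen (a + b).
Proof.
move=> [s [Hs ->]] [s' [Hs' ->]]; exists (s ++ s'); split; last by rewrite big_cat.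
by move=> t Ht; case: (List.in_app_or _ _ _ Ht) => [/Hs|/Hs'].
Qed.
Lemma idealMl r a : in_ideal_gen a -> in_ideal_gen (r * a).
Proof.
move=> [s [Hs ->]]; exists [seq (r * t.1.1, t.1.2, t.2) | t <- s]; split.
  by move=> t Ht; case: (proj1 (List.in_map_iff _ _ _) Ht) => [u [<- /Hs]].
by rewrite big_map mulr_sumr; apply: eq_bigr => t _; rewrite !mulrA.
Qed.
Lemma idealMr r a : in_ideal_gen a -> in_ideal_gen (a * r).
Proof.
move=> [s [Hs ->]]; exists [seq (t.1.1, t.1.2, t.2 * r) | t <- s]; split.
  by move=> t Ht; case: (proj1 (List.in_map_iff _ _ _) Ht) => [u [<- /Hs]].
by rewrite big_map mulr_suml; apply: eq_bigr => t _; rewrite !mulrA.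
Qed.
Lemma idealN a : in_ideal_gen a -> in_ideal_gen (- a).
Proof. by move=> /(idealMl (-1)); rewrite mulN1r. Qed.
Lemma ideal_gen_in g : G g -> in_ideal_gen g.
Proof.
move=> Gg; exists [:: (1, g, 1)]; split; first by move=> t [<-|].
by rewrite big_seq1 mul1r mulr1.
Qed.

Definition quot_rel (x y : A) : bool := pbool (in_ideal_gen (x - y)).
Lemma quot_relE x y : quot_rel x y <-> in_ideal_gen (x - y).
Proof. exact: pboolE. Qed.
Lemma quot_rel_refl : reflexive quot_rel.
Proof. by move=> x; apply/quot_relE; rewrite subrr; apply: ideal0. Qed.
Lemma quot_rel_sym : symmetric quot_rel.
Proof.
suff H x y : quot_rel x y -> quot_rel y x.
  by move=> x y; apply/idP/idP; apply: H.
by move/quot_relE/idealN; rewrite opprB => /quot_relE.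
Qed.
Lemma quot_rel_trans : transitive quot_rel.
Proof.
move=> y x z /quot_relE Hxy /quot_relE Hyz; apply/quot_relE.
by have := idealD Hxy Hyz; rewrite addrA subrK.
Qed.
Definition quot_equiv := EquivRel quot_rel quot_rel_refl quot_rel_sym quot_rel_trans.

Definition quot_ring := {eq_quot quot_equiv}.
HB.instance Definition _ := EqQuotient.on quot_ring.
HB.instance Definition _ := Choice.on quot_ring.

Local Notation pi := (\pi_quot_ring).

Lemma piP x y : in_ideal_gen (x - y) -> pi x = pi y.
Proof. by move=> H; apply/(@eqquotP _ _ quot_ring)/quot_relE. Qed.
Lemma reprP x : in_ideal_gen (repr (pi x) - x).
Proof. apply/quot_relE; apply/(@eqquotP _ _ quot_ring); exact: reprK. Qed.

Lemma qind (P : quot_ring -> Prop) : (forall a, P (pi a)) -> forall x, P x.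
Proof. move=> H x; rewrite -[x]reprK; exact: H. Qed.

Definition qzero : quot_ring := pi 0.
Definition qadd (x y : quot_ring) : quot_ring := pi (repr x + repr y).
Definition qopp (x : quot_ring) : quot_ring := pi (- repr x).
Definition qone : quot_ring := pi 1.
Definition qmul (x y : quot_ring) : quot_ring := pi (repr x * repr y).

Lemma qaddE a b : qadd (pi a) (pi b) = pi (a + b).
Proof.
apply: piP; have := idealD (reprP a) (reprP b).
by rewrite addrACA opprD.
Qed.
Lemma qoppE a : qopp (pi a) = pi (- a).
Proof. by apply: piP; have := idealN (reprP a); rewrite opprB addrC opprK. Qed.
Lemma qmulE a b : qmul (pi a) (pi b) = pi (a * b).
Proof.
apply: piP; set a' := repr (pi a); set b' := repr (pi b).
have -> : a' * b' - a * b = (a' - a) * b' + a * (b' - b).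
  by rewrite mulrBl mulrBr addrA subrK.
exact: idealD (idealMr _ (reprP a)) (idealMl _ (reprP b)).
Qed.

Lemma qaddA : associative qadd.
Proof. by elim/qind=> x; elim/qind=> y; elim/qind=> z; rewrite !qaddE addrA. Qed.
Lemma qaddC : commutative qadd.
Proof. by elim/qind=> x; elim/qind=> y; rewrite !qaddE addrC. Qed.
Lemma qadd0 : left_id qzero qadd.
Proof. by elim/qind=> x; rewrite qaddE add0r. Qed.
Lemma qaddN : left_inverse qzero qopp qadd.
Proof. by elim/qind=> x; rewrite qoppE qaddE addNr. Qed.
HB.instance Definition _ := GRing.isZmodule.Build quot_ring qaddA qaddC qadd0 qaddN.
Lemma qmulA : associative qmul.
Proof. by elim/qind=> x; elim/qind=> y; elim/qind=> z; rewrite !qmulE mulrA. Qed.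
Lemma qmul1 : left_id qone qmul.
Proof. by elim/qind=> x; rewrite qmulE mul1r. Qed.
Lemma qmulr1 : right_id qone qmul.
Proof. by elim/qind=> x; rewrite qmulE mulr1. Qed.
Lemma qmulDl : left_distributive qmul (@GRing.add quot_ring).
Proof.
by elim/qind=> x; elim/qind=> y; elim/qind=> z; rewrite /GRing.add /= !(qmulE, qaddE) mulrDl.
Qed.
Lemma qmulDr : right_distributive qmul (@GRing.add quot_ring).
Proof.
by elim/qind=> x; elim/qind=> y; elim/qind=> z; rewrite /GRing.add /= !(qmulE, qaddE) mulrDr.
Qed.
HB.instance Definition _ := GRing.Zmodule_isPzRing.Build quot_ring qmulA qmul1 qmulr1 qmulDl qmulDr.

End RingQuot.

Record category := Category {
  cat_ob : Type;
  cat_hom : cat_ob -> cat_ob -> Type;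
  cat_id : forall a, cat_hom a a;
  cat_comp : forall a b c, cat_hom b c -> cat_hom a b -> cat_hom a c;
  cat_comp1f : forall a b (f : cat_hom a b), cat_comp (cat_id b) f = f;
  cat_compf1 : forall a b (f : cat_hom a b), cat_comp f (cat_id a) = f;
  cat_compA : forall a b c d (h : cat_hom c d) (g : cat_hom b c) (f : cat_hom a b),
      cat_comp h (cat_comp g f) = cat_comp (cat_comp h g) f
}.
Arguments cat_hom : clear implicits.
Arguments cat_id {_} _.
Arguments cat_comp {_ _ _ _}.

Record functor (C D : category) := Functor {
  fobj : cat_ob C -> cat_ob D;
  fhom : forall a b, cat_hom C a b -> cat_hom D (fobj a) (fobj b);
  fhom_id : forall a, fhom (cat_id a) = cat_id (fobj a);
  fhom_comp : forall a b c (g : cat_hom C b c) (f : cat_hom C a b),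
      fhom (cat_comp g f) = cat_comp (fhom g) (fhom f)
}.
Arguments fobj {C D}.
Arguments fhom {C D} _ {a b}.

Definition cat_isomorphic (C D : category) : Prop :=
  exists (F : functor C D) (G : functor D C),
    [/\ forall a, fobj G (fobj F a) = a,
        forall a b (f : cat_hom C a b), JMeq (fhom G (fhom F f)) f,
        forall b, fobj F (fobj G b) = b &
        forall a b (g : cat_hom D a b), JMeq (fhom F (fhom G g)) g].

Lemma sig_eq_proj1 (A : Type) (P : A -> Prop) (x y : {a : A | P a}) :
  proj1_sig x = proj1_sig y -> x = y.
Proof.
case: x => x px; case: y => y py /= exy; subst y.
by rewrite (Classical_Prop.proof_irrelevance _ px py).
Qed.

(* Sweedler sums.  The comultiplication Delta : H -> H (x) H is encoded  *)
(* by giving, for every h, a finite list of pairs representing an       *)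
(* element sum_i a_i (x) b_i of H (x) H (Sweedler notation h_1 (x) h_2). *)
(* Equalities in H (x) H (resp. H (x) H (x) H) are expressed by testing  *)
(* against all bilinear (resp. trilinear) maps into all K-vector spaces  *)
(* (universal property of the tensor product).                          *)
Section Sweedler.
Variables (T : Type) (D : T -> seq (T * T)).

Definition sw2 (V : nmodType) (h : T) (f : T -> T -> V) : V :=
  \sum_(p <- D h) f p.1 p.2.
Definition sw3 (V : nmodType) (h : T) (f : T -> T -> T -> V) : V :=
  \sum_(p <- D h) \sum_(q <- D p.1) f q.1 q.2 p.2.
End Sweedler.

Definition bilin (K : pzRingType) (H W : lmodType K) (f : H -> H -> W) : Prop :=
  (forall a, linear (f a)) /\ (forall b, linear (fun a => f a b)).
Definition trilin (K : pzRingType) (H W : lmodType K) (f : H -> H -> H -> W) : Prop :=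
  [/\ forall a b, linear (f a b), forall a c, linear (fun b => f a b c) &
      forall b c, linear (fun a => f a b c)].

Record weak_hopf_algebra (K : fieldType) (H : algType K) := WeakHopfAlgebra {
  wh_delta : H -> seq (H * H);
  wh_eps : H -> K;
  wh_S : H -> H;
  wh_delta_linear : forall (W : lmodType K) (f : H -> H -> W), bilin f ->
    linear (fun h => sw2 wh_delta h f);
  wh_coassoc : forall (W : lmodType K) (f : H -> H -> H -> W), trilin f ->
    forall h, sw3 wh_delta h f =
              \sum_(p <- wh_delta h) \sum_(q <- wh_delta p.2) f p.1 q.1 q.2;
  wh_eps_linear : forall (a : K) (x y : H), wh_eps (a *: x + y) = a * wh_eps x + wh_eps y;
  wh_counit_l : forall h, sw2 wh_delta h (fun a b => wh_eps a *: b) = h;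
  wh_counit_r : forall h, sw2 wh_delta h (fun a b => wh_eps b *: a) = h;
  wh_S_linear : linear wh_S;
  (* Delta(kh) = Delta(k) Delta(h) *)
  wh_delta_mul : forall (W : lmodType K) (f : H -> H -> W), bilin f ->
    forall x y, sw2 wh_delta (x * y) f =
      \sum_(p <- wh_delta x) \sum_(q <- wh_delta y) f (p.1 * q.1) (p.2 * q.2);
  (* eps(k h_1) eps(h_2 g) = eps(k h g) = eps(k h_2) eps(h_1 g) *)
  wh_eps_mul_l : forall x y z,
    sw2 wh_delta y (fun a b => wh_eps (x * a) * wh_eps (b * z)) = wh_eps (x * y * z);
  wh_eps_mul_r : forall x y z,
    wh_eps (x * y * z) = sw2 wh_delta y (fun a b => wh_eps (x * b) * wh_eps (a * z));
  (* (1 (x) Delta(1))(Delta(1) (x) 1) = Delta^2(1) = (Delta(1) (x) 1)(1 (x) Delta(1)) *)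
  wh_unit_l : forall (W : lmodType K) (f : H -> H -> H -> W), trilin f ->
    \sum_(p <- wh_delta 1) \sum_(q <- wh_delta 1) f p.1 (q.1 * p.2) q.2
      = sw3 wh_delta 1 f;
  wh_unit_r : forall (W : lmodType K) (f : H -> H -> H -> W), trilin f ->
    sw3 wh_delta 1 f
      = \sum_(p <- wh_delta 1) \sum_(q <- wh_delta 1) f p.1 (p.2 * q.1) q.2;
  (* h_1 S(h_2) = eps(1_1 h) 1_2 *)
  wh_antipode_l : forall h,
    sw2 wh_delta h (fun a b => a * wh_S b) = sw2 wh_delta 1 (fun a b => wh_eps (a * h) *: b);
  (* S(h_1) h_2 = 1_1 eps(h 1_2) *)
  wh_antipode_r : forall h,
    sw2 wh_delta h (fun a b => wh_S a * b) = sw2 wh_delta 1 (fun a b => wh_eps (h * b) *: a);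
  (* S(h) = S(h_1) h_2 S(h_3) *)
  wh_antipode_SSS : forall h,
    wh_S h = sw3 wh_delta h (fun a b c => wh_S a * b * wh_S c)
}.

Section PartialModules.
Variables (K : fieldType) (H : algType K) (WH : weak_hopf_algebra H).
Local Notation D := (wh_delta WH).
Local Notation S := (wh_S WH).

Record parModule := ParModule {
  pm_car :> lmodType K;
  pm_act : H -> pm_car -> pm_car;         (* the linear map H (x) M -> M *)
  pm_act_linear_r : forall h, linear (pm_act h);
  pm_act_linear_l : forall m, linear (fun h => pm_act h m);
  pm_unit : forall m, pm_act 1 m = m;
  pm_ax2 : forall h k m,
    sw2 D k (fun a b => pm_act h (pm_act a (pm_act (S b) m)))
    = sw2 D k (fun a b => pm_act (h * a) (pm_act (S b) m));
  pm_ax3 : forall h k m,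
    sw2 D k (fun a b => pm_act h (pm_act (S a) (pm_act b m)))
    = sw2 D k (fun a b => pm_act (h * S a) (pm_act b m));
  pm_ax4 : forall h k m,
    sw2 D h (fun a b => pm_act a (pm_act (S b) (pm_act k m)))
    = sw2 D h (fun a b => pm_act a (pm_act (S b * k) m));
  pm_ax5 : forall h k m,
    sw2 D h (fun a b => pm_act (S a) (pm_act b (pm_act k m)))
    = sw2 D h (fun a b => pm_act (S a) (pm_act (b * k) m));
  pm_ax6 : forall h m,
    sw3 D h (fun a b c => pm_act a (pm_act (S b) (pm_act c m))) = pm_act h m
}.

Definition parHom (M N : parModule) :=
  {f : M -> N | linear f /\ forall h m, f (@pm_act M h m) = @pm_act N h (f m)}.

Definition parHom_id (M : parModule) : parHom M M.
Proof. by exists id; split. Defined.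

Definition parHom_comp (M N P : parModule) (g : parHom N P) (f : parHom M N) :
  parHom M P.
Proof.
exists (fun x => proj1_sig g (proj1_sig f x)); split.
- by move=> a u v; rewrite (proj1 (proj2_sig f)) (proj1 (proj2_sig g)).
- by move=> h m; rewrite (proj2 (proj2_sig f)) (proj2 (proj2_sig g)).
Defined.

Definition parModCat : category.
Proof.
refine (@Category parModule parHom parHom_id parHom_comp _ _ _);
  by move=> *; apply: sig_eq_proj1.
Defined.

(* H_par^w = T(H) / I.  T(H) is realised as the free K-algebra on the   *)
(* set H (noncommutative polynomials, words in the letters [h], h in H) *)
(* modulo the linearity relations [a+b] = [a]+[b], [c a] = c [a]; thus  *)
(* T(H)/I is the free algebra modulo the ideal generated by the         *)
(* linearity relations together with the generators of I, where a word  *)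
(* [h_1][h_2]...[h_n] stands for h_1 (x) h_2 (x) ... (x) h_n.            *)
Definition freeAlg := {malg K[fmonom H]}.
Definition gen (x : H) : freeAlg := << fmu x >>.

Definition Hpar_rel (x : freeAlg) : Prop :=
  (* linearity of the generators: this realises the tensor algebra T(H) *)
  (exists a b, x = gen (a + b) - gen a - gen b) \/
  (exists (c : K) a, x = gen (c *: a) - c *: gen a) \/
  x = gen 1 - 1 \/
  (exists h k, x = sw2 D k (fun a b =>
                     gen h * gen a * gen (S b) - gen (h * a) * gen (S b))) \/
  (exists h k, x = sw2 D k (fun a b =>
                     gen h * gen (S a) * gen b - gen (h * S a) * gen b)) \/
  (exists h k, x = sw2 D h (fun a b =>
                     gen a * gen (S b) * gen k - gen a * gen (S b * k))) \/
  (exists h k, x = sw2 D h (fun a b =>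
                     gen (S a) * gen b * gen k - gen (S a) * gen (b * k))) \/
  (exists h, x = gen h - sw3 D h (fun a b c => gen a * gen (S b) * gen c)).

Definition Hpar : pzRingType := quot_ring Hpar_rel.

Definition modHom (R : pzRingType) (M N : lmodType R) := {f : M -> N | linear f}.

End PartialModules.

Definition modHom_id (R : pzRingType) (M : lmodType R) : modHom M M.
Proof. by exists id. Defined.
Definition modHom_comp (R : pzRingType) (M N P : lmodType R)
  (g : modHom N P) (f : modHom M N) : modHom M P.
Proof.
exists (fun x => proj1_sig g (proj1_sig f x)).
by move=> a u v; rewrite (proj2_sig f) (proj2_sig g).
Defined.

Definition ModCat (R : pzRingType) : category.
Proof.
refine (@Category (lmodType R) (@modHom R) (@modHom_id R) (@modHom_comp R) _ _ _);
  by move=> *; apply: sig_eq_proj1.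
Defined.

From Pilot Require Import Defs.
From HB Require Import structures.
From mathcomp Require Import all_boot all_algebra.
From mathcomp Require Import finmap.
From mathcomp.multinomials Require Import monalg.
From Stdlib Require Import JMeq ProofIrrelevance FunctionalExtensionality.
Set Implicit Arguments. Unset Strict Implicit. Unset Printing Implicit Defensive.
Import GRing.Theory.
Local Open Scope ring_scope.
Local Open Scope quotient_scope.

(* Extending the action multiplicatively to words
   makes M a module over the free algebra on H in which every generator of I,
   hence I itself, acts by zero, so M is an H_par^w-module.  Conversely an
   H_par^w-module is a vector space through K -> H_par^w, and h acting as the
   class of [h] satisfies the partial-module axioms because the relations hold
   in H_par^w.  Both constructions keep the underlying additive group and the
   underlying maps of morphisms, and they are mutually inverse on the nose. *)

Section LinearMap.
Variables (R : pzRingType) (U V : lmodType R) (f : U -> V).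
Hypothesis f_linear : linear f.

Lemma linear_mapD : {morph f : x y / x + y}.
Proof. by move=> x y; have := f_linear 1 x y; rewrite !scale1r. Qed.

Lemma linear_map0 : f 0 = 0.
Proof. by apply: (addrI (f 0)); rewrite -linear_mapD !addr0. Qed.

Lemma linear_mapZ a : {morph f : x / a *: x}.
Proof. by move=> x; have := f_linear a x 0; rewrite !addr0 linear_map0 addr0. Qed.

Lemma linear_map_sum (I : Type) (r : seq I) (F : I -> U) :
  f (\sum_(i <- r) F i) = \sum_(i <- r) f (F i).
Proof. exact: (big_morph _ linear_mapD linear_map0). Qed.
End LinearMap.

Section ActionModule.
Variables (R : pzRingType) (M : zmodType) (act : R -> M -> M).
Hypotheses (actA : forall a b v, act a (act b v) = act (a * b) v)
  (act0 : forall v, act 0 v = 0) (act1 : forall v, act 1 v = v)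
  (actDr : forall a u v, act a (u + v) = act a u + act a v)
  (actDl : forall v a b, act (a + b) v = act a v + act b v).

(* Keeps the additive structure of M, so that nested uses of [act_lmodType]
   are convertible to a single one; the round trips below rely on this. *)
Definition act_lmodType : lmodType R :=
  HB.pack_for (lmodType R) M
    (GRing.Nmodule_isLSemiModule.Build R M actA act0 act1 actDr actDl).
End ActionModule.

Lemma act_lmodType_scale (R : pzRingType) (M : lmodType R) act actA act0 act1 actDr actDl :
  (forall a v, act a v = a *: v) ->
  @act_lmodType R M act actA act0 act1 actDr actDl = M.
Proof.
move=> actE.
have Eact : act = @GRing.scale R M.
  by do 2 apply: functional_extensionality => ?; exact: actE.
subst act; clear actE.
case: M actA act0 act1 actDr actDl => T [? ? ? ? ? ? ? ? ? [? ? ? ? ? ?]] /= *.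
rewrite /act_lmodType /GRing.Nmodule_isLSemiModule.phant_Build /=.
by do 3 f_equal; apply: proof_irrelevance.
Qed.

Section ScalarRestriction.
Variables (R1 R2 : pzRingType) (f : {rmorphism R2 -> R1}) (M : lmodType R1).

Let fscale (a : R2) (v : M) := f a *: v.
Let fscaleA a b v : fscale a (fscale b v) = fscale (a * b) v.
Proof. by rewrite /fscale scalerA rmorphM. Qed.
Let fscale0 v : fscale 0 v = 0.
Proof. by rewrite /fscale rmorph0 scale0r. Qed.
Let fscale1 v : fscale 1 v = v.
Proof. by rewrite /fscale rmorph1 scale1r. Qed.
Let fscaleDr a u v : fscale a (u + v) = fscale a u + fscale a v.
Proof. exact: scalerDr. Qed.
Let fscaleDl v a b : fscale (a + b) v = fscale a v + fscale b v.
Proof. by rewrite /fscale rmorphD scalerDl. Qed.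

Definition restrict_lmod : lmodType R2 :=
  act_lmodType fscaleA fscale0 fscale1 fscaleDr fscaleDl.
End ScalarRestriction.

Section SweedlerSums.
Variables (T : Type) (D : T -> seq (T * T)).

Lemma eq_sw2 (V : nmodType) h (f g : T -> T -> V) :
  (forall a b, f a b = g a b) -> sw2 D h f = sw2 D h g.
Proof. by move=> fg; apply: eq_bigr => p _; exact: fg. Qed.

Lemma eq_sw3 (V : nmodType) h (f g : T -> T -> T -> V) :
  (forall a b c, f a b c = g a b c) -> sw3 D h f = sw3 D h g.
Proof. by move=> fg; apply: eq_bigr => p _; apply: eq_bigr => q _; exact: fg. Qed.

Lemma sw2B (V : zmodType) h (f g : T -> T -> V) :
  sw2 D h (fun a b => f a b - g a b) = sw2 D h f - sw2 D h g.
Proof. exact: sumrB. Qed.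

Variables (U V : nmodType) (F : U -> V).
Hypotheses (F0 : F 0 = 0) (FD : {morph F : x y / x + y}).

Lemma sw2_morph h f : F (sw2 D h f) = sw2 D h (fun a b => F (f a b)).
Proof. exact: (big_morph _ FD F0). Qed.

Lemma sw3_morph h f : F (sw3 D h f) = sw3 D h (fun a b c => F (f a b c)).
Proof.
by rewrite [LHS](big_morph _ FD F0); apply: eq_bigr => p _; exact: (big_morph _ FD F0).
Qed.
End SweedlerSums.

Lemma mulr_malgC (R : comNzRingType) (G : monomType) (c : R) (g : {malg R[G]}) :
  g * c%:MP = c%:MP * g.
Proof.
rewrite [g]monalgE mulr_suml mulr_sumr; apply: eq_bigr => k _.
by rewrite !malgM_def !fgmulUU mulm1 mul1m mulrC.
Qed.

Section FreeAction.
Variables (K : fieldType) (H : algType K) (WH : weak_hopf_algebra H) (M : parModule WH).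
Local Notation D := (wh_delta WH).
Local Notation act := (@pm_act _ _ _ M).

Definition act_word (s : seq H) (m : M) : M := foldr act m s.

Lemma act_word_linear s : linear (act_word s).
Proof. by elim: s => [|h s IHs] a u v //=; rewrite IHs pm_act_linear_r. Qed.

Lemma act_word_cat s t m : act_word (s ++ t) m = act_word s (act_word t m).
Proof. exact: foldr_cat. Qed.

Definition free_act (g : freeAlg H) (m : M) : M :=
  \sum_(k <- msupp g) g@_k *: act_word k m.

Lemma free_act_linear g : linear (free_act g).
Proof.
move=> a u v; rewrite /free_act scaler_sumr -big_split /=; apply: eq_bigr => k _.
by rewrite act_word_linear scalerDr !scalerA mulrC.
Qed.

Lemma free_act_supp (d : {fset {fmonom H}}) g m : (msupp g `<=` d)%fset ->
  free_act g m = \sum_(k <- d) g@_k *: act_word k m.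
Proof.
move=> le_gd; rewrite /free_act (big_fset_incl _ le_gd) // => k _ /mcoeff_outdom ->.
by rewrite scale0r.
Qed.

Lemma free_act0 m : free_act 0 m = 0.
Proof. by rewrite /free_act msupp0 big_seq_fset0. Qed.

Lemma free_actD m : {morph free_act^~ m : g1 g2 / g1 + g2}.
Proof.
move=> g1 g2 /=.
rewrite (free_act_supp _ (msuppD_le g1 g2)) (free_act_supp _ (fsubsetUl _ (msupp g2))).
rewrite (free_act_supp _ (fsubsetUr (msupp g1) _)) -big_split /=.
by apply: eq_bigr => k _; rewrite mcoeffD scalerDl.
Qed.

Lemma free_act_sum (I : Type) (r : seq I) (F : I -> freeAlg H) m :
  free_act (\sum_(i <- r) F i) m = \sum_(i <- r) free_act (F i) m.
Proof. exact: (big_morph _ (free_actD m) (free_act0 m)). Qed.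

Lemma free_actN g m : free_act (- g) m = - free_act g m.
Proof.
by rewrite /free_act msuppN -sumrN; apply: eq_bigr => k _; rewrite mcoeffN scaleNr.
Qed.

Lemma free_actB g1 g2 m : free_act (g1 - g2) m = free_act g1 m - free_act g2 m.
Proof. by rewrite free_actD free_actN. Qed.

Lemma free_actZ c g m : free_act (c *: g) m = c *: free_act g m.
Proof.
rewrite (free_act_supp _ (msuppZ_le c g)) /free_act scaler_sumr.
by apply: eq_bigr => k _; rewrite mcoeffZ scalerA.
Qed.

Lemma free_actU c k m : free_act << c *g k >> m = c *: act_word k m.
Proof. by rewrite (free_act_supp _ msuppU_le) big_seq_fset1 mcoeffUU. Qed.

Lemma free_act_gen h m : free_act (gen h) m = act h m.
Proof. by rewrite free_actU scale1r fmuE. Qed.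

Lemma free_actC c m : free_act c%:MP m = c *: m.
Proof. by rewrite free_actU fm1. Qed.

Lemma free_act1 m : free_act 1 m = m.
Proof. by rewrite -mpolyC1E free_actC scale1r. Qed.

Lemma free_actM g1 g2 m : free_act (g1 * g2) m = free_act g1 (free_act g2 m).
Proof.
rewrite malgME free_act_sum [free_act g1 _]/free_act.
apply: eq_bigr => k1 _; rewrite free_act_sum [free_act g2 m]/free_act.
rewrite (linear_map_sum (act_word_linear k1)) scaler_sumr; apply: eq_bigr => k2 _.
by rewrite free_actU fmM act_word_cat (linear_mapZ (act_word_linear k1)) scalerA.
Qed.

Lemma free_act_gen2 x y m : free_act (gen x * gen y) m = act x (act y m).
Proof. by rewrite free_actM !free_act_gen. Qed.

Lemma free_act_gen3 x y z m :
  free_act (gen x * gen y * gen z) m = act x (act y (act z m)).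
Proof. by rewrite free_actM free_act_gen2 free_act_gen. Qed.

Lemma free_act_rel g m : Hpar_rel WH g -> free_act g m = 0.
Proof.
(* Occurrences are pinned down: trying to match [gen _ * gen _] against a
   different product unfolds the multiplication of the free algebra. *)
have act_sw2 := sw2_morph D (free_act0 m) (free_actD m).
case=> [[a [b ->]]|[[c [a ->]]|[->|[[h [k ->]]|[[h [k ->]]|[[h [k ->]]|[[h [k ->]]|[h ->]]]]]]]].
- by rewrite !free_actB !free_act_gen (linear_mapD (pm_act_linear_l m)) addrAC addrK subrr.
- by rewrite free_actB free_actZ !free_act_gen (linear_mapZ (pm_act_linear_l m)) subrr.
- by rewrite free_actB free_act_gen free_act1 pm_unit subrr.
- rewrite act_sw2; under eq_sw2 do rewrite free_actB [X in _ - X]free_act_gen2 free_act_gen3.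
  by rewrite sw2B pm_ax2 subrr.
- rewrite act_sw2; under eq_sw2 do rewrite free_actB [X in _ - X]free_act_gen2 free_act_gen3.
  by rewrite sw2B pm_ax3 subrr.
- rewrite act_sw2; under eq_sw2 do rewrite free_actB [X in _ - X]free_act_gen2 free_act_gen3.
  by rewrite sw2B pm_ax4 subrr.
- rewrite act_sw2; under eq_sw2 do rewrite free_actB [X in _ - X]free_act_gen2 free_act_gen3.
  by rewrite sw2B pm_ax5 subrr.
- rewrite free_actB free_act_gen (sw3_morph D (free_act0 m) (free_actD m)).
  by under eq_sw3 do rewrite free_act_gen3; rewrite pm_ax6 subrr.
Qed.

Lemma free_act_ideal g m : in_ideal_gen (Hpar_rel WH) g -> free_act g m = 0.
Proof.
case=> s [+ ->]; elim: s => [|t s IHs] s_rel; first by rewrite big_nil free_act0.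
rewrite big_cons free_actD IHs => [|u u_s]; last by apply: s_rel; right.
rewrite !free_actM (free_act_rel _ (s_rel t (or_introl erefl))).
by rewrite (linear_map0 (free_act_linear _)) addr0.
Qed.
End FreeAction.

Section HparQuotient.
Variables (K : fieldType) (H : algType K) (WH : weak_hopf_algebra H).

(* Locked, so that failed matches never unfold the quotient map. *)
Fact hpi_key : unit. Proof. exact: tt. Qed.
Definition hpi : freeAlg H -> Hpar WH :=
  locked_with hpi_key \pi_(quot_ring (Hpar_rel WH)).

Lemma hpiE : hpi = \pi_(quot_ring (Hpar_rel WH)).
Proof. exact: unlock. Qed.

Lemma hpi_ind (P : Hpar WH -> Prop) : (forall g, P (hpi g)) -> forall x, P x.
Proof. rewrite hpiE; exact: qind. Qed.

Lemma hpiB : {morph hpi : x y / x - y}.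
Proof. by move=> x y; rewrite -[RHS]/(qadd (hpi x) (qopp (hpi y))) hpiE qoppE qaddE. Qed.

Lemma hpiM : {morph hpi : x y / x * y}.
Proof. by move=> x y; rewrite -[RHS]/(qmul (hpi x) (hpi y)) hpiE qmulE. Qed.

Lemma hpi1 : hpi 1 = 1.
Proof. by rewrite hpiE. Qed.

HB.instance Definition _ := GRing.isZmodMorphism.Build _ _ hpi hpiB.
HB.instance Definition _ := GRing.isMonoidMorphism.Build _ _ hpi (hpi1, hpiM).

Lemma hpi_rel x y : Hpar_rel WH (x - y) -> hpi x = hpi y.
Proof. by rewrite hpiE => xy; apply: Defs.piP; exact: ideal_gen_in. Qed.

Definition hpar_scalar : {rmorphism K -> Hpar WH} := hpi \o malgC.

Lemma hpar_scalarE c : hpar_scalar c = hpi c%:MP.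
Proof. by []. Qed.

Lemma hpar_scalar_central x c : x * hpar_scalar c = hpar_scalar c * x.
Proof. by elim/hpi_ind: x => g; rewrite hpar_scalarE -!rmorphM mulr_malgC. Qed.

Lemma hpi_genD x y : hpi (gen (x + y)) = hpi (gen x) + hpi (gen y).
Proof. by rewrite -rmorphD; apply: hpi_rel; rewrite opprD addrA; left; exists x, y. Qed.

Lemma hpi_genZ c x : hpi (gen (c *: x)) = hpar_scalar c * hpi (gen x).
Proof.
by rewrite hpar_scalarE -rmorphM mul_malgC; apply: hpi_rel; right; left; exists c, x.
Qed.

Lemma hpi_gen1 : hpi (gen 1) = 1.
Proof. by rewrite -(rmorph1 hpi); apply: hpi_rel; do 2 right; left. Qed.

Section HparModule.
Variable M : parModule WH.

Definition hpar_scale (x : Hpar WH) (m : M) : M := free_act (repr x) m.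

Lemma hpar_scale_pi g m : hpar_scale (hpi g) m = free_act g m.
Proof. by apply/eqP; rewrite -subr_eq0 -free_actB free_act_ideal // hpiE; exact: reprP. Qed.

Let hpar_scaleA x y m : hpar_scale x (hpar_scale y m) = hpar_scale (x * y) m.
Proof.
by elim/hpi_ind: x => g; elim/hpi_ind: y => g'; rewrite -rmorphM !hpar_scale_pi free_actM.
Qed.

Let hpar_scale0 m : hpar_scale 0 m = 0.
Proof. by rewrite -(rmorph0 hpi) hpar_scale_pi free_act0. Qed.

Let hpar_scale1 m : hpar_scale 1 m = m.
Proof. by rewrite -(rmorph1 hpi) hpar_scale_pi free_act1. Qed.

Let hpar_scaleDr x u v : hpar_scale x (u + v) = hpar_scale x u + hpar_scale x v.
Proof. exact: (linear_mapD (free_act_linear _)). Qed.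

Let hpar_scaleDl m x y : hpar_scale (x + y) m = hpar_scale x m + hpar_scale y m.
Proof.
by elim/hpi_ind: x => g; elim/hpi_ind: y => g'; rewrite -rmorphD !hpar_scale_pi free_actD.
Qed.

Definition hpar_lmod : lmodType (Hpar WH) :=
  act_lmodType hpar_scaleA hpar_scale0 hpar_scale1 hpar_scaleDr hpar_scaleDl.
End HparModule.

Section ParModuleOfLmod.
Variable N : lmodType (Hpar WH).
Local Notation D := (wh_delta WH).
Local Notation S := (wh_S WH).
Local Notation NK := (restrict_lmod hpar_scalar N).

Definition gen_act (h : H) (m : N) : N := hpi (gen h) *: m.

Let hpi_scale0 (m : N) : hpi 0 *: m = 0.
Proof. by rewrite raddf0 scale0r. Qed.

Let hpi_scaleD (m : N) : {morph (fun x => hpi x *: m) : x y / x + y}.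
Proof. by move=> x y; rewrite raddfD scalerDl. Qed.

Lemma sw2_hpi_scale k X (m : N) :
  sw2 D k (fun a b => hpi (X a b) *: m) = hpi (sw2 D k X) *: m.
Proof. by rewrite (sw2_morph _ (hpi_scale0 m) (hpi_scaleD m)). Qed.

Lemma sw3_hpi_scale k X (m : N) :
  sw3 D k (fun a b c => hpi (X a b c) *: m) = hpi (sw3 D k X) *: m.
Proof. by rewrite (sw3_morph _ (hpi_scale0 m) (hpi_scaleD m)). Qed.

Lemma sw2_hpi_scale_rel k X Y (m : N) :
  Hpar_rel WH (sw2 D k (fun a b => X a b - Y a b)) ->
  sw2 D k (fun a b => hpi (X a b) *: m) = sw2 D k (fun a b => hpi (Y a b) *: m).
Proof.
by rewrite sw2B [LHS]sw2_hpi_scale [RHS]sw2_hpi_scale => /hpi_rel->.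
Qed.

Lemma gen_act2 x y m : gen_act x (gen_act y m) = hpi (gen x * gen y) *: m.
Proof. by rewrite [in RHS]rmorphM -[in RHS]scalerA. Qed.

Lemma gen_act3 x y z m :
  gen_act x (gen_act y (gen_act z m)) = hpi (gen x * gen y * gen z) *: m.
Proof. by rewrite [in RHS]rmorphM -[in RHS]scalerA gen_act2. Qed.

Lemma gen_act_linear h : linear (gen_act h : NK -> NK).
Proof.
move=> a u v.
change (hpi (gen h) *: (hpar_scalar a *: u + v)
  = hpar_scalar a *: (hpi (gen h) *: u) + hpi (gen h) *: v).
by rewrite scalerDr [in LHS]scalerA hpar_scalar_central -scalerA.
Qed.

Lemma gen_act_linear_l (m : NK) : linear (gen_act^~ m : H -> NK).
Proof.
move=> a h1 h2.
change (hpi (gen (a *: h1 + h2)) *: m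
  = hpar_scalar a *: (hpi (gen h1) *: m) + hpi (gen h2) *: m).
by rewrite [in LHS]hpi_genD [in LHS]hpi_genZ scalerDl [in RHS]scalerA.
Qed.

Lemma gen_act1 m : gen_act 1 m = m.
Proof. by rewrite /gen_act hpi_gen1 scale1r. Qed.

Lemma gen_act_ax2 h k m :
  sw2 D k (fun a b => gen_act h (gen_act a (gen_act (S b) m)))
  = sw2 D k (fun a b => gen_act (h * a) (gen_act (S b) m)).
Proof.
under eq_sw2 do rewrite gen_act3; under [RHS]eq_sw2 do rewrite gen_act2.
by apply: sw2_hpi_scale_rel; do 3 right; left; exists h, k.
Qed.

Lemma gen_act_ax3 h k m :
  sw2 D k (fun a b => gen_act h (gen_act (S a) (gen_act b m)))
  = sw2 D k (fun a b => gen_act (h * S a) (gen_act b m)).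
Proof.
under eq_sw2 do rewrite gen_act3; under [RHS]eq_sw2 do rewrite gen_act2.
by apply: sw2_hpi_scale_rel; do 4 right; left; exists h, k.
Qed.

Lemma gen_act_ax4 h k m :
  sw2 D h (fun a b => gen_act a (gen_act (S b) (gen_act k m)))
  = sw2 D h (fun a b => gen_act a (gen_act (S b * k) m)).
Proof.
under eq_sw2 do rewrite gen_act3; under [RHS]eq_sw2 do rewrite gen_act2.
by apply: sw2_hpi_scale_rel; do 5 right; left; exists h, k.
Qed.

Lemma gen_act_ax5 h k m :
  sw2 D h (fun a b => gen_act (S a) (gen_act b (gen_act k m)))
  = sw2 D h (fun a b => gen_act (S a) (gen_act (b * k) m)).
Proof.
under eq_sw2 do rewrite gen_act3; under [RHS]eq_sw2 do rewrite gen_act2.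
by apply: sw2_hpi_scale_rel; do 6 right; left; exists h, k.
Qed.

Lemma gen_act_ax6 h m :
  sw3 D h (fun a b c => gen_act a (gen_act (S b) (gen_act c m))) = gen_act h m.
Proof.
under eq_sw3 do rewrite gen_act3.
rewrite sw3_hpi_scale /gen_act; congr (_ *: _); apply/esym/hpi_rel.
by do 7 right; exists h.
Qed.

Definition par_of_lmod : parModule WH :=
  ParModule gen_act_linear gen_act_linear_l gen_act1
    gen_act_ax2 gen_act_ax3 gen_act_ax4 gen_act_ax5 gen_act_ax6.
End ParModuleOfLmod.
End HparQuotient.

Lemma JMeq_of_eq (T : Type) (x y : T) : x = y -> JMeq x y.
Proof. by move->. Qed.

Lemma modHom_JMeq (R : pzRingType) (A A' B B' : lmodType R)
    (g : modHom A' B') (f : modHom A B) :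
  A' = A -> B' = B -> JMeq (proj1_sig g) (proj1_sig f) -> JMeq g f.
Proof. by move=> eA eB; subst A' B' => /(@JMeq_eq _ _ _)/sig_eq_proj1->. Qed.

Section Functors.
Variables (K : fieldType) (H : algType K) (WH : weak_hopf_algebra H).

Section ParHom.
Variables (A B : parModule WH) (f : parHom A B).
Local Notation phi := (proj1_sig f).
Let phi_linear := proj1 (proj2_sig f).
Let phi_act := proj2 (proj2_sig f).

Lemma parHom_act_word s m : phi (act_word s m) = act_word s (phi m).
Proof. by elim: s => //= h s <-; rewrite phi_act. Qed.

Lemma parHom_free_act g m : phi (free_act g m) = free_act g (phi m).
Proof.
rewrite /free_act (linear_map_sum phi_linear); apply: eq_bigr => k _.
by rewrite (linear_mapZ phi_linear) parHom_act_word.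
Qed.

Lemma hpar_lmod_hom_linear : linear (phi : hpar_lmod A -> hpar_lmod B).
Proof.
move=> x u v; change (phi (hpar_scale x u + v) = hpar_scale x (phi u) + phi v).
by rewrite (linear_mapD phi_linear) /hpar_scale parHom_free_act.
Qed.

Definition hpar_lmod_hom : modHom (hpar_lmod A) (hpar_lmod B) :=
  exist _ _ hpar_lmod_hom_linear.
End ParHom.

Section ModHom.
Variables (A B : lmodType (Hpar WH)) (f : modHom A B).
Local Notation phi := (proj1_sig f).

Lemma par_of_lmod_hom_spec : linear (phi : par_of_lmod A -> par_of_lmod B) /\
  forall h m, phi (gen_act h m) = gen_act h (phi m).
Proof. by split=> [a|h m]; [exact: (proj2_sig f) | exact: (linear_mapZ (proj2_sig f))]. Qed.

Definition par_of_lmod_hom : parHom (par_of_lmod A) (par_of_lmod B) :=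
  exist _ _ par_of_lmod_hom_spec.
End ModHom.

Definition hpar_functor : functor (parModCat WH) (ModCat (Hpar WH)).
Proof.
refine (@Functor (parModCat WH) (ModCat (Hpar WH)) (@hpar_lmod _ _ WH)
  (fun A B f => hpar_lmod_hom f) _ _) => *; exact: sig_eq_proj1.
Defined.

Definition par_functor : functor (ModCat (Hpar WH)) (parModCat WH).
Proof.
refine (@Functor (ModCat (Hpar WH)) (parModCat WH) (@par_of_lmod _ _ WH)
  (fun A B f => par_of_lmod_hom f) _ _) => *; exact: sig_eq_proj1.
Defined.

Lemma parModule_eq (A B : parModule WH) (e : pm_car A = pm_car B) :
  JMeq (@pm_act _ _ _ A) (@pm_act _ _ _ B) -> A = B.
Proof.
case: A e => cA aA ? ? ? ? ? ? ? ?; case: B => cB aB ? ? ? ? ? ? ? ? /= eAB.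
subst cB => /(@JMeq_eq _ _ _) eact; subst aB.
by f_equal; apply: proof_irrelevance.
Qed.

Lemma parHom_JMeq (A A' B B' : parModule WH) (g : parHom A' B') (f : parHom A B) :
  A' = A -> B' = B -> JMeq (proj1_sig g) (proj1_sig f) -> JMeq g f.
Proof. by move=> eA eB; subst A' B' => /(@JMeq_eq _ _ _)/sig_eq_proj1->. Qed.

Lemma par_of_lmodK (M : parModule WH) : par_of_lmod (hpar_lmod M) = M.
Proof.
have eM : pm_car (par_of_lmod (hpar_lmod M)) = pm_car M.
  apply: act_lmodType_scale => c v.
  change (hpar_scale (hpar_scalar WH c) v = c *: v).
  by rewrite hpar_scalarE hpar_scale_pi free_actC.
apply: (parModule_eq eM); apply: JMeq_of_eq.
apply: functional_extensionality => h; apply: functional_extensionality => m.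
by rewrite [LHS]hpar_scale_pi free_act_gen.
Qed.

Lemma gen_monom_cons h s : gen h * << FMonom s >> = << FMonom (h :: s) >> :> freeAlg H.
Proof.
rewrite /gen malgM_def fgmulUU mulr1; congr (mkmalgU _ _).
by apply: val_inj; rewrite /= fmM fmuE.
Qed.

Section ParOfLmod.
Variable N : lmodType (Hpar WH).

Lemma act_word_par_of_lmod (k : {fmonom H}) (m : N) :
  act_word (M := par_of_lmod N) k m = hpi WH << k >> *: m.
Proof.
case: k => s; elim: s => [|h s IHs] /=.
  have -> : FMonom [::] = mone :> {fmonom H} by apply: val_inj; rewrite /= fm1.
  by rewrite mpolyC1E rmorph1 scale1r.
by rewrite IHs /gen_act scalerA -rmorphM gen_monom_cons.
Qed.

Lemma free_act_par_of_lmod g (m : N) :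
  free_act (M := par_of_lmod N) g m = hpi WH g *: m.
Proof.
rewrite /free_act [in RHS](monalgE g) rmorph_sum scaler_suml; apply: eq_bigr => k _.
change (hpar_scalar WH g@_k *: act_word (M := par_of_lmod N) k m = hpi WH << g@_k *g k >> *: m).
by rewrite act_word_par_of_lmod scalerA hpar_scalarE -rmorphM malgM_def fgmulUU mul1m mulr1.
Qed.

Lemma hpar_lmodK : hpar_lmod (par_of_lmod N) = N.
Proof.
apply: act_lmodType_scale => x m; elim/hpi_ind: x => g.
by rewrite hpar_scale_pi free_act_par_of_lmod.
Qed.
End ParOfLmod.

Lemma par_of_lmod_homK (A B : parModule WH) (f : parHom A B) :
  JMeq (par_of_lmod_hom (hpar_lmod_hom f)) f.
Proof. by apply: (parHom_JMeq (par_of_lmodK A) (par_of_lmodK B)); apply: JMeq_of_eq. Qed.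

Lemma hpar_lmod_homK (A B : lmodType (Hpar WH)) (f : modHom A B) :
  JMeq (hpar_lmod_hom (par_of_lmod_hom f)) f.
Proof. by apply: (modHom_JMeq (hpar_lmodK A) (hpar_lmodK B)); apply: JMeq_of_eq. Qed.
End Functors.

Theorem proposition6p6 (K : fieldType) (H : algType K) (WH : weak_hopf_algebra H) :
  cat_isomorphic (parModCat WH) (ModCat (Hpar WH)).
Proof.
exists (hpar_functor WH), (par_functor WH); split.
- exact: par_of_lmodK.
- exact: par_of_lmod_homK.
- exact: hpar_lmodK.
- exact: hpar_lmod_homK.
Qed.
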